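(* Let $X$ be a Tychonoff space. The following are equivalent: (1) $(C(X),\tau_\Gamma)$ is first countable; (2) $(C(X),\tau_\Gamma)$ is metrizable; (3) $(C(X),\tau_\Gamma)$ is completely metrizable; (4) $(C(X),\tau_\Gamma)$ is Čech-complete; (5) $X$ is countably compact; (6) $(C(X),\tau_\Gamma)$ is Fréchet (Fréchet–Urysohn); (7) $(C(X),\tau_\Gamma)$ has countable tightness.
   Context: $C(X)$ is the set of continuous real-valued functions on $X$, each identified with its graph in $X\times\mathbb{R}$. The graph topology $\tau_\Gamma$ on $C(X)$ has base $\{F_G: G\text{ open in }X\times\mathbb{R}\}$ where $F_G=\{f\in C(X): f\subset G\}$. *)

From Stdlib Require Import Reals List Classical.
Open Scope R_scope.

Definition is_topology {T : Type} (op : (T -> Prop) -> Prop) : Prop :=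
  op (fun _ => True) /\
  (forall U V, op U -> op V -> op (fun x => U x /\ V x)) /\
  (forall F : (T -> Prop) -> Prop, (forall U, F U -> op U) ->
      op (fun x => exists U, F U /\ U x)).

Definition R_open (U : R -> Prop) : Prop :=
  forall r, U r -> exists eps, 0 < eps /\ forall s, Rabs (s - r) < eps -> U s.

Definition continuous {T S : Type} (opT : (T -> Prop) -> Prop)
  (opS : (S -> Prop) -> Prop) (f : T -> S) : Prop :=
  forall V, opS V -> opT (fun x => V (f x)).

Definition closure {T : Type} (op : (T -> Prop) -> Prop) (A : T -> Prop) (x : T) : Prop :=
  forall U, op U -> U x -> exists y, U y /\ A y.

Definition is_closed {T : Type} (op : (T -> Prop) -> Prop) (A : T -> Prop) : Prop :=
  op (fun x => ~ A x).

Definition seq_converges {T : Type} (op : (T -> Prop) -> Prop) (s : nat -> T) (x : T) : Prop :=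
  forall U, op U -> U x -> exists N, forall n, (N <= n)%nat -> U (s n).

Definition countable_set {T : Type} (B : T -> Prop) : Prop :=
  exists g : T -> nat, forall y z, B y -> B z -> g y = g z -> y = z.

Definition T1_space {T : Type} (op : (T -> Prop) -> Prop) : Prop :=
  forall x y, x <> y -> exists U, op U /\ U x /\ ~ U y.

Definition hausdorff {T : Type} (op : (T -> Prop) -> Prop) : Prop :=
  forall x y, x <> y -> exists U V, op U /\ op V /\ U x /\ V y /\
     (forall z, ~ (U z /\ V z)).

Definition tychonoff {T : Type} (op : (T -> Prop) -> Prop) : Prop :=
  T1_space op /\
  forall (A : T -> Prop) (x : T), is_closed op A -> ~ A x ->
    exists f : T -> R, continuous op R_open f /\
      (forall y, 0 <= f y <= 1) /\ f x = 0 /\ (forall y, A y -> f y = 1).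

Definition compact {T : Type} (op : (T -> Prop) -> Prop) : Prop :=
  forall F : (T -> Prop) -> Prop, (forall U, F U -> op U) ->
    (forall x, exists U, F U /\ U x) ->
    exists l : list (T -> Prop), (forall U, In U l -> F U) /\
      (forall x, exists U, In U l /\ U x).

Definition countably_compact {T : Type} (op : (T -> Prop) -> Prop) : Prop :=
  forall U : nat -> (T -> Prop), (forall n, op (U n)) ->
    (forall x, exists n, U n x) ->
    exists l : list nat, forall x, exists n, In n l /\ U n x.

Definition first_countable {T : Type} (op : (T -> Prop) -> Prop) : Prop :=
  forall x, exists B : nat -> (T -> Prop),
    (forall n, op (B n) /\ B n x) /\
    (forall U, op U -> U x -> exists n, forall y, B n y -> U y).

Definition frechet_urysohn {T : Type} (op : (T -> Prop) -> Prop) : Prop :=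
  forall (A : T -> Prop) x, closure op A x ->
    exists s : nat -> T, (forall n, A (s n)) /\ seq_converges op s x.

Definition countable_tightness {T : Type} (op : (T -> Prop) -> Prop) : Prop :=
  forall (A : T -> Prop) x, closure op A x ->
    exists B : T -> Prop, (forall y, B y -> A y) /\ countable_set B /\ closure op B x.

Definition is_metric {T : Type} (d : T -> T -> R) : Prop :=
  (forall x y, 0 <= d x y) /\ (forall x y, d x y = 0 <-> x = y) /\
  (forall x y, d x y = d y x) /\ (forall x y z, d x z <= d x y + d y z).

Definition metric_open {T : Type} (d : T -> T -> R) (U : T -> Prop) : Prop :=
  forall x, U x -> exists eps, 0 < eps /\ forall y, d x y < eps -> U y.

Definition metric_complete {T : Type} (d : T -> T -> R) : Prop :=
  forall s : nat -> T,
    (forall eps, 0 < eps -> exists N, forall m n, (N <= m)%nat -> (N <= n)%nat ->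
        d (s m) (s n) < eps) ->
    exists x, forall eps, 0 < eps -> exists N, forall n, (N <= n)%nat -> d (s n) x < eps.

Definition metrizable {T : Type} (op : (T -> Prop) -> Prop) : Prop :=
  exists d : T -> T -> R, is_metric d /\ forall U, op U <-> metric_open d U.

Definition completely_metrizable {T : Type} (op : (T -> Prop) -> Prop) : Prop :=
  exists d : T -> T -> R, is_metric d /\ metric_complete d /\
    forall U, op U <-> metric_open d U.

(* Cech-completeness: X is a G_delta in some Hausdorff compactification
   (K, e) of X (e a homeomorphic embedding with dense image). *)
Definition cech_complete {T : Type} (op : (T -> Prop) -> Prop) : Prop :=
  exists (K : Type) (opK : (K -> Prop) -> Prop) (e : T -> K),
    is_topology opK /\ hausdorff opK /\ compact opK /\
    (forall x y, e x = e y -> x = y) /\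
    continuous op opK e /\
    (forall U, op U -> exists V, opK V /\ forall x, U x <-> V (e x)) /\
    (forall k, closure opK (fun k' => exists x, e x = k') k) /\
    (exists V : nat -> (K -> Prop), (forall n, opK (V n)) /\
       forall k, (forall n, V n k) <-> exists x, e x = k).

Definition prod_open {T : Type} (op : (T -> Prop) -> Prop) (G : T * R -> Prop) : Prop :=
  forall x r, G (x, r) -> exists V eps, op V /\ V x /\ 0 < eps /\
    forall y s, V y -> Rabs (s - r) < eps -> G (y, s).

Definition CX {T : Type} (op : (T -> Prop) -> Prop) : Type :=
  { f : T -> R | continuous op R_open f }.

(* f subset G, f identified with its graph in X x R. *)
Definition graph_in {T : Type} (f : T -> R) (G : T * R -> Prop) : Prop :=
  forall x, G (x, f x).

Definition F_G {T : Type} (op : (T -> Prop) -> Prop) (G : T * R -> Prop) (f : CX op) : Prop :=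
  graph_in (proj1_sig f) G.

(* The graph topology tau_Gamma: the topology generated by the base
   { F_G : G open in X x R } (open sets = unions of basic open sets). *)
Definition graph_open {T : Type} (op : (T -> Prop) -> Prop) (W : CX op -> Prop) : Prop :=
  forall f, W f -> exists G, prod_open op G /\ F_G op G f /\
    (forall g, F_G op G g -> W g).

(* Over a countably compact X a tube lemma shows that tau_Gamma is
   the topology of the truncated sup metric, which is complete.  A completely metrizable
   space is metrizable, first countable, Frechet-Urysohn and countably tight, and it is
   Cech-complete: it is the G_delta set of "small" ultrafilters inside its Wallman
   compactification by closed-set ultrafilters.  Each property gives countable tightness at the zero function
   (for Cech-completeness because 0 is a G_delta point and G_delta points of compact
   Hausdorff spaces have countable local bases).  If X is not countably compact it has
   an injective closed discrete sequence (x_n); 0 lies in the closure of the functions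
   vanishing at no x_n (a weighted series of bump functions), while no countable family
   of such functions accumulates at 0. *)

From Pilot Require Import Defs.
From Stdlib Require Import Reals List Classical.
From Stdlib Require Import Lra Lia Arith.
From Stdlib Require Import FunctionalExtensionality PropExtensionality ProofIrrelevance ClassicalEpsilon.
From mathcomp Require classical_sets.
Open Scope R_scope.

Lemma pred_ext {A : Type} (P Q : A -> Prop) : (forall x, P x <-> Q x) -> P = Q.
Proof.
  intro H. apply functional_extensionality. intro x.
  apply propositional_extensionality, H.
Qed.

Lemma op_ext {A : Type} (op : (A -> Prop) -> Prop) (P Q : A -> Prop) :
  op P -> (forall x, P x <-> Q x) -> op Q.
Proof. intros H E. rewrite <- (pred_ext P Q E). exact H. Qed.

Lemma op_True {A : Type} (op : (A -> Prop) -> Prop) :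
  is_topology op -> op (fun _ => True).
Proof. intros [H _]. exact H. Qed.

Lemma op_inter {A : Type} (op : (A -> Prop) -> Prop) U V :
  is_topology op -> op U -> op V -> op (fun x => U x /\ V x).
Proof. intros [_ [H _]]. apply H. Qed.

Lemma op_local {A : Type} (op : (A -> Prop) -> Prop) (P : A -> Prop) :
  is_topology op ->
  (forall x, P x -> exists V, op V /\ V x /\ forall y, V y -> P y) -> op P.
Proof.
  intros [_ [_ Hunion]] H.
  apply op_ext with (P := fun x => exists U, (op U /\ forall y, U y -> P y) /\ U x).
  - apply Hunion. intros U [HU _]. exact HU.
  - intro x. split.
    + intros [U [[_ HU] Ux]]. apply HU, Ux.
    + intro Px. destruct (H x Px) as [V [HV [Vx HVP]]]. exists V. tauto.
Qed.

Definition inter_list {A : Type} (l : list (A -> Prop)) : A -> Prop :=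
  fun x => forall C, In C l -> C x.

Lemma op_inter_list {A : Type} (op : (A -> Prop) -> Prop) (l : list (A -> Prop)) :
  is_topology op -> (forall U, In U l -> op U) -> op (inter_list l).
Proof.
  intros Ht. induction l as [|U l IH]; intro Hl.
  - apply (op_ext op (fun _ => True)); [apply op_True; auto|].
    intro x; split; [intros _ C []|auto].
  - apply (op_ext op (fun x => U x /\ inter_list l x)).
    + apply op_inter; auto. apply Hl; left; auto. apply IH. intros V HV. apply Hl; right; auto.
    + intro x; split.
      * intros [Ux Lx] C [<-|HC]; auto. apply Lx, HC.
      * intro Hx. split. apply Hx; left; auto. intros C HC. apply Hx; right; auto.
Qed.

Fixpoint first_inter {A : Type} (Cs : nat -> A -> Prop) (n : nat) : A -> Prop :=
  match n with
  | O => Cs O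
  | S m => fun w => first_inter Cs m w /\ Cs (S m) w
  end.

Lemma first_inter_mono {A : Type} (Cs : nat -> A -> Prop) n m w :
  (n <= m)%nat -> first_inter Cs m w -> first_inter Cs n w.
Proof. intro H. induction H; auto. intros [Hw _]. auto. Qed.

Lemma first_inter_last {A : Type} (Cs : nat -> A -> Prop) n w : first_inter Cs n w -> Cs n w.
Proof. destruct n; simpl; tauto. Qed.

Lemma first_inter_all {A : Type} (Cs : nat -> A -> Prop) n w :
  (forall m, Cs m w) -> first_inter Cs n w.
Proof. intro H. induction n; simpl; auto. Qed.

Lemma op_first_inter {A : Type} (op : (A -> Prop) -> Prop) (Cs : nat -> A -> Prop) n :
  is_topology op -> (forall m, op (Cs m)) -> op (first_inter Cs n).
Proof. intros Ht HC. induction n; simpl; auto. apply op_inter; auto. Qed.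

Lemma finite_choice {A B : Type} (Rel : A -> B -> Prop) (l : list A) :
  (forall a, In a l -> exists b, Rel a b) ->
  exists l' : list B, (forall b, In b l' -> exists a, In a l /\ Rel a b) /\
    forall a, In a l -> exists b, In b l' /\ Rel a b.
Proof.
  induction l as [|a l IH]; intro H.
  - exists nil. split; intros ? [].
  - destruct IH as [l' [Hl'1 Hl'2]]. { intros a' Ha'. apply H. right; auto. }
    destruct (H a (or_introl eq_refl)) as [b Hb].
    exists (b :: l'). split.
    + intros b' [<-|Hb'].
      * exists a. split; auto. left; auto.
      * destruct (Hl'1 b' Hb') as [a' [Ha' Rab]]. exists a'. split; auto. right; auto.
    + intros a' [<-|Ha'].
      * exists b. split; auto. left; auto.
      * destruct (Hl'2 a' Ha') as [b' [Hb' Rb']]. exists b'. split; auto. right; auto.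
Qed.

Lemma list_nat_max (l : list nat) : exists M, forall n, In n l -> (n <= M)%nat.
Proof.
  induction l as [|a l [M HM]].
  - exists O. intros n [].
  - exists (Nat.max a M). intros n [<-|H]. lia. pose proof (HM n H). lia.
Qed.

Lemma range_countable {A : Type} (s : nat -> A) : countable_set (fun y => exists n, s n = y).
Proof.
  exists (fun y => epsilon (inhabits 0%nat) (fun n => s n = y)).
  intros y z Hy Hz E.
  pose proof (epsilon_spec (inhabits 0%nat) (fun n => s n = y) Hy) as Ey.
  pose proof (epsilon_spec (inhabits 0%nat) (fun n => s n = z) Hz) as Ez.
  simpl in *. rewrite <- Ey, <- Ez, E. reflexivity.
Qed.

Lemma Rabs_le_between x a : Rabs x <= a -> - a <= x <= a.
Proof. unfold Rabs. destruct (Rcase_abs x); intro; lra. Qed.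

Lemma inv_succ_pos n : 0 < / (INR n + 1).
Proof. apply Rinv_0_lt_compat. pose proof (pos_INR n). lra. Qed.

Lemma arch_inv eps : 0 < eps -> exists N, forall n, (N <= n)%nat -> / (INR n + 1) < eps.
Proof.
  intro He. destruct (archimed_cor1 eps He) as [N [HN HN0]]. exists N. intros n Hn.
  apply le_INR in Hn. assert (0 < INR N) by (apply lt_0_INR; lia).
  apply Rle_lt_trans with (/ INR N); auto. apply Rlt_le. apply Rinv_lt_contravar; nra.
Qed.

Section RealFunctions.
Variable T : Type.
Variable op : (T -> Prop) -> Prop.
Hypothesis Ht : is_topology op.

Lemma R_open_interval a b : R_open (fun s => a < s < b).
Proof.
  intros r Hr. exists (Rmin (r - a) (b - r)). split.
  - apply Rmin_case; lra.
  - intros s Hs. pose proof (Rmin_l (r - a) (b - r)). pose proof (Rmin_r (r - a) (b - r)).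
    apply Rabs_def2 in Hs. lra.
Qed.

Lemma cont_char (f : T -> R) :
  continuous op R_open f <->
  forall x eps, 0 < eps -> exists V, op V /\ V x /\ forall y, V y -> Rabs (f y - f x) < eps.
Proof.
  split.
  - intros Hc x eps He. exists (fun y => f x - eps < f y < f x + eps). split.
    + apply (Hc (fun s => f x - eps < s < f x + eps)). apply R_open_interval.
    + split. lra. intros y Hy. apply Rabs_def1; lra.
  - intros H V HV. apply op_local; auto. intros x Vx.
    destruct (HV (f x) Vx) as [eps [He Heps]].
    destruct (H x eps He) as [W [HW [Wx HWy]]].
    exists W. split; [exact HW|split; [exact Wx|]]. intros y Wy. apply Heps, HWy, Wy.
Qed.

Lemma cont_const c : continuous op R_open (fun _ => c).
Proof.
  apply cont_char. intros x eps He. exists (fun _ => True).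
  split. apply op_True; auto. split; auto. intros. rewrite Rminus_diag, Rabs_R0. lra.
Qed.

Lemma cont_plus f g :
  continuous op R_open f -> continuous op R_open g ->
  continuous op R_open (fun x => f x + g x).
Proof.
  rewrite !cont_char. intros Hf Hg x eps He.
  destruct (Hf x (eps/2)) as [V [HV [Vx HVf]]]. lra.
  destruct (Hg x (eps/2)) as [W [HW [Wx HWg]]]. lra.
  exists (fun y => V y /\ W y). split. apply op_inter; auto. split; auto.
  intros y [Vy Wy]. specialize (HVf y Vy). specialize (HWg y Wy).
  replace (f y + g y - (f x + g x)) with ((f y - f x) + (g y - g x)) by ring.
  pose proof (Rabs_triang (f y - f x) (g y - g x)). lra.
Qed.

Lemma cont_scal c f :
  continuous op R_open f -> continuous op R_open (fun x => c * f x).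
Proof.
  rewrite !cont_char. intros Hf x eps He.
  assert (Hc : 0 < Rabs c + 1) by (pose proof (Rabs_pos c); lra).
  destruct (Hf x (eps / (Rabs c + 1))) as [V [HV [Vx HVf]]].
  { apply Rdiv_lt_0_compat; auto. }
  exists V. repeat split; auto. intros y Vy. specialize (HVf y Vy).
  replace (c * f y - c * f x) with (c * (f y - f x)) by ring. rewrite Rabs_mult.
  apply (Rmult_lt_compat_l (Rabs c + 1)) in HVf; [|lra].
  replace ((Rabs c + 1) * (eps / (Rabs c + 1))) with eps in HVf by (field; lra).
  pose proof (Rabs_pos (f y - f x)). nra.
Qed.

Lemma cont_uniform_limit (s : nat -> T -> R) (L : T -> R) :
  (forall n, continuous op R_open (s n)) ->
  (forall eps, 0 < eps -> exists N, forall t, Rabs (s N t - L t) <= eps) ->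
  continuous op R_open L.
Proof.
  intros Hs Hunif. apply cont_char. intros x eps He.
  destruct (Hunif (eps/4)) as [N HN]. lra.
  destruct (proj1 (cont_char (s N)) (Hs N) x (eps/4)) as [V [HV [Vx HVb]]]. lra.
  exists V. repeat split; auto. intros y Vy. specialize (HVb y Vy).
  pose proof (HN x) as Hx. pose proof (HN y) as Hy.
  apply Rabs_def2 in HVb. apply Rabs_le_between in Hx, Hy.
  apply Rabs_def1; lra.
Qed.

End RealFunctions.

(** * Metric balls and the countability properties of metrizable spaces *)

Section MetricBalls.
Context {M : Type} (d : M -> M -> R) (Hm : is_metric d).

Definition ball (x : M) (r : R) : M -> Prop := fun y => d x y < r.

Lemma dist_self x : d x x = 0.
Proof. destruct Hm as [_ [H _]]. apply H. reflexivity. Qed.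

Lemma ball_open x r : metric_open d (ball x r).
Proof.
  destruct Hm as [_ [_ [_ Htri]]]. intros y Hy. exists (r - d x y). split.
  - unfold ball in Hy. lra.
  - intros w Hw. unfold ball. pose proof (Htri x y w). lra.
Qed.

Lemma ball_center x r : 0 < r -> ball x r x.
Proof. unfold ball. rewrite dist_self. auto. Qed.

Lemma ball_inside U x :
  metric_open d U -> U x -> exists N, forall y, ball x (/ (INR N + 1)) y -> U y.
Proof.
  intros HU Ux. destruct (HU x Ux) as [eps [He Hb]].
  destruct (arch_inv eps He) as [N HN]. exists N. intros y Hy. apply Hb.
  unfold ball in Hy. pose proof (HN N (le_n N)). lra.
Qed.

End MetricBalls.

Definition fc_at {A : Type} (op : (A -> Prop) -> Prop) (x : A) : Prop :=
  exists B : nat -> (A -> Prop), (forall n, op (B n) /\ B n x) /\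
    (forall U, op U -> U x -> exists n, forall y, B n y -> U y).

Definition tight_at {A : Type} (op : (A -> Prop) -> Prop) (x : A) : Prop :=
  forall P, closure op P x ->
    exists B, (forall y, B y -> P y) /\ countable_set B /\ closure op B x.

Lemma completely_metrizable_metrizable {A : Type} (op : (A -> Prop) -> Prop) :
  completely_metrizable op -> metrizable op.
Proof. intros [d [H1 [_ H3]]]. exists d. auto. Qed.

Lemma metrizable_first_countable {A : Type} (op : (A -> Prop) -> Prop) :
  metrizable op -> first_countable op.
Proof.
  intros [d [Hm Hop]] x. exists (fun n => ball d x (/ (INR n + 1))). split.
  - intro n. split.
    + apply Hop, ball_open, Hm.
    + apply ball_center; auto. apply inv_succ_pos.
  - intros U HU Ux. apply Hop in HU. apply (ball_inside d U x HU Ux).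
Qed.

(* Picking a point of P in each ball 1/(n+1) around x gives a sequence converging to x. *)
Lemma metrizable_frechet {A : Type} (op : (A -> Prop) -> Prop) :
  metrizable op -> frechet_urysohn op.
Proof.
  intros [d [Hm Hop]] P x Hcl.
  assert (Hn : forall n, {y | P y /\ ball d x (/ (INR n + 1)) y}).
  { intro n. apply constructive_indefinite_description.
    destruct (Hcl (ball d x (/ (INR n + 1)))) as [y [Hy Py]].
    - apply Hop, ball_open, Hm.
    - apply ball_center; auto. apply inv_succ_pos.
    - exists y. auto. }
  exists (fun n => proj1_sig (Hn n)). split.
  - intro n. apply (proj2_sig (Hn n)).
  - intros U HU Ux. apply Hop in HU. destruct (ball_inside d U x HU Ux) as [N HN].
    exists N. intros n Hnn. apply HN. destruct (proj2_sig (Hn n)) as [_ Hd].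
    unfold ball in *. apply le_INR in Hnn. pose proof (pos_INR N).
    assert (/ (INR n + 1) <= / (INR N + 1)) by (apply Rinv_le_contravar; lra). lra.
Qed.

Lemma frechet_tightness {A : Type} (op : (A -> Prop) -> Prop) :
  frechet_urysohn op -> countable_tightness op.
Proof.
  intros Hf P x Hcl. destruct (Hf P x Hcl) as [s [Hs Hcv]].
  exists (fun y => exists n, s n = y). split; [|split].
  - intros y [n <-]. auto.
  - apply range_countable.
  - intros U HU Ux. destruct (Hcv U HU Ux) as [N HN].
    exists (s N). split. apply HN; auto. exists N; auto.
Qed.

Lemma fc_at_tight_at {A : Type} (op : (A -> Prop) -> Prop) x : fc_at op x -> tight_at op x.
Proof.
  intros [B [HB1 HB2]] P Hcl.
  assert (Hs : forall n, {y | B n y /\ P y}).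
  { intro n. apply constructive_indefinite_description. apply Hcl; apply HB1. }
  exists (fun y => exists n, proj1_sig (Hs n) = y). split; [|split].
  - intros y [n <-]. apply (proj2_sig (Hs n)).
  - apply range_countable.
  - intros U HU Ux. destruct (HB2 U HU Ux) as [n Hn]. exists (proj1_sig (Hs n)).
    split. apply Hn, (proj2_sig (Hs n)). exists n; auto.
Qed.

(** * Closed-set ultrafilters of a metric space *)

(* For a metric space M, the maximal families of closed sets with the finite
   intersection property are the points of the Wallman compactification of M. *)

Section ClosedUltrafilters.
Context {M : Type} (d : M -> M -> R) (Hm : is_metric d).

Definition mclosed (C : M -> Prop) : Prop := metric_open d (fun x => ~ C x).

Definition closed_family (F : (M -> Prop) -> Prop) : Prop := forall C, F C -> mclosed C.

Definition has_fip (F : (M -> Prop) -> Prop) : Prop :=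
  forall l, (forall C, In C l -> F C) -> exists x, inter_list l x.

Definition ultra (p : (M -> Prop) -> Prop) : Prop :=
  closed_family p /\ has_fip p /\
  forall q, closed_family q -> has_fip q -> (forall C, p C -> q C) -> forall C, q C -> p C.

Lemma mclosed_True : mclosed (fun _ => True).
Proof. intros x H. exfalso. apply H. exact I. Qed.

Lemma mclosed_compl U : metric_open d U -> mclosed (fun x => ~ U x).
Proof.
  intros HU x Hx. apply NNPP in Hx. destruct (HU x Hx) as [r [Hr Hy]].
  exists r. split; auto.
Qed.

Lemma mclosed_single x : mclosed (fun y => y = x).
Proof.
  destruct Hm as [H0 [H1 _]]. intros y Hy. exists (d y x). split.
  - destruct (Rle_lt_or_eq_dec 0 (d y x) (H0 y x)) as [H|H]; auto.
    exfalso. apply Hy, H1. auto.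
  - intros w Hw Hwx. subst. lra.
Qed.

Lemma mclosed_inter_list l : (forall C, In C l -> mclosed C) -> mclosed (inter_list l).
Proof.
  intros H x Hx. apply not_all_ex_not in Hx. destruct Hx as [C HC].
  apply imply_to_and in HC. destruct HC as [HCl HCx].
  destruct (H C HCl x HCx) as [r [Hr Hb]]. exists r. split; auto.
  intros y Hy Hly. apply (Hb y Hy), Hly, HCl.
Qed.

Lemma has_fip_mono (F G : (M -> Prop) -> Prop) :
  (forall C, F C -> G C) -> has_fip G -> has_fip F.
Proof. intros HFG HG l Hl. apply HG. auto. Qed.

Lemma list_without (p : (M -> Prop) -> Prop) (D : M -> Prop) l :
  (forall C, In C l -> p C \/ C = D) ->
  exists l', (forall C, In C l' -> p C) /\
    forall x, D x -> inter_list l' x -> inter_list l x.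
Proof.
  induction l as [|C l IH]; intro H.
  - exists nil. split. intros C []. intros x _ _ C [].
  - destruct IH as [l' [H1 H2]]. { intros C' HC'. apply H. right. exact HC'. }
    destruct (H C (or_introl eq_refl)) as [HC|HC].
    + exists (C :: l'). split.
      * intros C' [<-|HC']; auto.
      * intros x Dx Hx C' [<-|HC']. apply Hx; left; auto.
        apply (H2 x Dx); auto. intros C'' HC''. apply Hx. right; auto.
    + exists l'. split; auto.
      intros x Dx Hx C' [<-|HC']; [subst; auto | apply (H2 x Dx); auto].
Qed.

Section Ultra.
Variable p : (M -> Prop) -> Prop.
Hypothesis Hp : ultra p.

Lemma ultra_add D :
  mclosed D -> (forall l, (forall C, In C l -> p C) -> exists x, D x /\ inter_list l x) -> p D.
Proof.
  destruct Hp as [Hc [Hf Hmax]]. intros HD H.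
  apply (Hmax (fun C => p C \/ C = D)).
  - intros C [HC|HC]. apply Hc; auto. subst; auto.
  - intros l Hl. destruct (list_without p D l Hl) as [l' [H1 H2]].
    destruct (H l' H1) as [x [Dx Hx]]. exists x. apply H2; auto.
  - intros C HC; left; auto.
  - right; auto.
Qed.

Lemma ultra_inter_list l : (forall C, In C l -> p C) -> p (inter_list l).
Proof.
  intros Hl. apply ultra_add.
  - apply mclosed_inter_list. intros C HC. apply (proj1 Hp). auto.
  - intros l' Hl'. destruct (proj1 (proj2 Hp) (l ++ l')) as [x Hx].
    { intros C HC. apply in_app_or in HC. destruct HC; auto. }
    exists x. split; intros C HC; apply Hx, in_or_app; auto.
Qed.

Lemma ultra_inter C D : p C -> p D -> p (fun x => C x /\ D x).
Proof.
  intros HC HD. replace (fun x => C x /\ D x) with (inter_list (C :: D :: nil)).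
  - apply ultra_inter_list. intros C' [<-|[<-|[]]]; auto.
  - apply pred_ext. intro x. split.
    + intro H. split; apply H; simpl; auto.
    + intros [Cx Dx] C' [<-|[<-|[]]]; auto.
Qed.

Lemma ultra_nonempty C : p C -> exists x, C x.
Proof.
  intro HC. destruct (proj1 (proj2 Hp) (C :: nil)) as [x Hx].
  - intros C' [<-|[]]; auto.
  - exists x. apply Hx. left; auto.
Qed.

Lemma ultra_True : p (fun _ => True).
Proof.
  apply ultra_add. apply mclosed_True.
  intros l Hl. destruct (proj1 (proj2 Hp) l Hl) as [x Hx]. exists x. auto.
Qed.

Lemma not_in_ultra C : mclosed C -> ~ p C -> exists D, p D /\ forall x, ~ (C x /\ D x).
Proof.
  intros HC HnC. apply NNPP. intro Hn. apply HnC, ultra_add; auto.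
  intros l Hl. apply NNPP. intro Hn2. apply Hn. exists (inter_list l). split.
  - apply ultra_inter_list, Hl.
  - intros x [Cx Lx]. apply Hn2. exists x. auto.
Qed.

Lemma ultra_compl_or_inside U :
  metric_open d U -> p (fun x => ~ U x) \/ exists C, p C /\ forall y, C y -> U y.
Proof.
  intro HU. destruct (classic (p (fun x => ~ U x))) as [H|H]; [left; exact H|right].
  destruct (not_in_ultra _ (mclosed_compl U HU) H) as [D [HD Hdis]].
  exists D. split; auto. intros y Dy. apply NNPP. intro Uy. apply (Hdis y). auto.
Qed.

End Ultra.

Lemma ultra_extend S :
  closed_family S -> has_fip S -> exists p, ultra p /\ forall C, S C -> p C.
Proof.
  intros HSc HSf.
  set (P := fun G => closed_family G /\ has_fip (fun C => S C \/ G C)).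
  destruct (@classical_sets.Zorn_bigcup (M -> Prop) P) as [G [[HGc HGf] HGmax]].
  - intros F HFP Htot. split.
    + intros C [G FG GC]. apply (proj1 (HFP G FG)), GC.
    + assert (Hone : forall l, (forall C, In C l -> S C \/ exists2 G, F G & G C) ->
          exists G, (G = (fun _ => False) \/ F G) /\ forall C, In C l -> S C \/ G C).
      { induction l as [|C l IH]; intro Hl.
        - exists (fun _ => False). split; [left; reflexivity|]. intros C0 [].
        - destruct IH as [G [HG1 HG2]]. { intros C' H'; apply Hl; right; auto. }
          destruct (Hl C (or_introl eq_refl)) as [HC|[G' FG' G'C]].
          + exists G. split; auto. intros C' [<-|H']; auto.
          + destruct HG1 as [->|FG].
            * exists G'. split; auto. intros C' [<-|H']; auto.
              destruct (HG2 C' H') as [HS|[]]; auto.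
            * destruct (Htot G' G FG' FG) as [Hsub|Hsub].
              -- exists G. split; auto. intros C' [<-|H']; auto.
              -- exists G'. split; auto. intros C' [<-|H']; auto.
                 destruct (HG2 C' H'); auto. }
      intros l Hl. destruct (Hone l Hl) as [G [[->|FG] HG]].
      * apply HSf. intros C HC. destruct (HG C HC) as [?|[]]; auto.
      * apply (proj2 (HFP G FG)). auto.
  - exists (fun C => S C \/ G C). split; [split; [|split]|]; auto.
    + intros C [HC|HC]; auto.
    + intros q Hqc Hqf Hpq C HqC. right.
      apply NNPP. intro HnG. apply (HGmax q).
      * split. intros C' GC'. apply Hpq. auto.
        intro Hsub. apply HnG, Hsub, HqC.
      * split; auto. apply (has_fip_mono _ q); auto. intros C' [?|?]; auto.
Qed.

Definition prin (x : M) : (M -> Prop) -> Prop := fun C => mclosed C /\ C x.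

Lemma prin_ultra x : ultra (prin x).
Proof.
  split; [|split].
  - intros C [HC _]. exact HC.
  - intros l Hl. exists x. intros C HC. apply Hl, HC.
  - intros q Hqc Hqf Hpq C HC. split. apply Hqc, HC.
    destruct (Hqf (C :: (fun y => y = x) :: nil)) as [w Hw].
    + intros C' [<-|[<-|[]]]; auto. apply Hpq. split. apply mclosed_single. auto.
    + assert (w = x) by (apply Hw; right; left; auto). subst. apply Hw. left; auto.
Qed.

Lemma ultra_eq_prin p x : ultra p -> (forall C, p C -> C x) -> forall C, p C <-> prin x C.
Proof.
  intros Hp Hx C. split.
  - intro HC. split. apply (proj1 Hp), HC. apply Hx, HC.
  - destruct Hp as [Hc [_ Hmax]]. intro HC.
    apply (Hmax (prin x) (proj1 (prin_ultra x)) (proj1 (proj2 (prin_ultra x)))); [|exact HC].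
    intros C0 HC0. exact (conj (Hc C0 HC0) (Hx C0 HC0)).
Qed.

End ClosedUltrafilters.

(** * The Wallman compactification of a metric space *)

Section Wallman.
Context {M : Type} (d : M -> M -> R) (Hm : is_metric d).

Definition WK : Type := {p : (M -> Prop) -> Prop | ultra d p}.

Definition wbasic (U : M -> Prop) (k : WK) : Prop :=
  exists C, proj1_sig k C /\ forall y, C y -> U y.

Definition wopen (W : WK -> Prop) : Prop :=
  forall k, W k -> exists U, metric_open d U /\ wbasic U k /\ forall k', wbasic U k' -> W k'.

Lemma WK_ext (k1 k2 : WK) : (forall C, proj1_sig k1 C <-> proj1_sig k2 C) -> k1 = k2.
Proof.
  destruct k1 as [p1 H1], k2 as [p2 H2]. simpl. intro H.
  assert (p1 = p2) by (apply pred_ext; auto). subst. f_equal. apply proof_irrelevance.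
Qed.

Lemma wbasic_open U : metric_open d U -> wopen (wbasic U).
Proof. intros HU k Hk. exists U. auto. Qed.

Lemma metric_open_inter U V :
  metric_open d U -> metric_open d V -> metric_open d (fun x => U x /\ V x).
Proof.
  intros HU HV x [Ux Vx]. destruct (HU x Ux) as [r [Hr HrU]]. destruct (HV x Vx) as [s [Hs HsV]].
  exists (Rmin r s). split. apply Rmin_case; auto. intros y Hy. split.
  apply HrU. pose proof (Rmin_l r s). lra. apply HsV. pose proof (Rmin_r r s). lra.
Qed.

Lemma wopen_topology : is_topology wopen.
Proof.
  split; [|split].
  - intros k _. exists (fun _ => True). split; [intros x _; exists 1; split; [lra|auto]|].
    split; auto. exists (fun _ => True). split; auto. apply (ultra_True d), (proj2_sig k).
  - intros W1 W2 H1 H2 k [W1k W2k].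
    destruct (H1 k W1k) as [U1 [HU1 [[C1 [C1k C1U]] HW1]]].
    destruct (H2 k W2k) as [U2 [HU2 [[C2 [C2k C2U]] HW2]]].
    exists (fun x => U1 x /\ U2 x). split; [apply metric_open_inter; auto|split].
    + exists (fun x => C1 x /\ C2 x). split. apply (ultra_inter d); auto. apply (proj2_sig k).
      intros y [? ?]; auto.
    + intros k' [C [Ck' HC]]. split; [apply HW1 | apply HW2];
        exists C; split; auto; intros y Cy; apply HC; auto.
  - intros F HF k [W [FW Wk]]. destruct (HF W FW k Wk) as [U [HU [HUk HUW]]].
    exists U. repeat split; auto. intros k' H'. exists W. auto.
Qed.

Lemma metric_normal C D :
  mclosed d C -> mclosed d D -> (forall x, ~ (C x /\ D x)) ->
  exists U V, metric_open d U /\ metric_open d V /\ (forall x, C x -> U x) /\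
    (forall x, D x -> V x) /\ forall x, ~ (U x /\ V x).
Proof.
  pose proof Hm as [_ [_ [Hs Ht]]]. intros HC HD Hdis.
  set (U := fun x => exists c r, C c /\ 0 < r /\ (forall y, d c y < 2*r -> ~ D y) /\ d c x < r).
  set (V := fun x => exists c r, D c /\ 0 < r /\ (forall y, d c y < 2*r -> ~ C y) /\ d c x < r).
  exists U, V. split; [|split; [|split; [|split]]].
  - intros x [c [r [Cc [Hr [Hb Hx]]]]]. exists (r - d c x). split. lra.
    intros y Hy. exists c, r. repeat split; auto. pose proof (Ht c x y). lra.
  - intros x [c [r [Cc [Hr [Hb Hx]]]]]. exists (r - d c x). split. lra.
    intros y Hy. exists c, r. repeat split; auto. pose proof (Ht c x y). lra.
  - intros c Cc. assert (~ D c) by (intro; apply (Hdis c); auto).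
    destruct (HD c H) as [r0 [Hr0 Hb]]. exists c, (r0/2). repeat split; auto. lra.
    intros y Hy. apply Hb. lra. rewrite dist_self; auto. lra.
  - intros c Dc. assert (~ C c) by (intro; apply (Hdis c); auto).
    destruct (HC c H) as [r0 [Hr0 Hb]]. exists c, (r0/2). repeat split; auto. lra.
    intros y Hy. apply Hb. lra. rewrite dist_self; auto. lra.
  - intros x [[c [r [Cc [Hr [Hb Hx]]]]] [e [s [De [Hs' [Hb' Hx']]]]]].
    destruct (Rle_or_lt s r).
    + apply (Hb e); auto. pose proof (Ht c x e). rewrite (Hs x e) in *. lra.
    + apply (Hb' c); auto. pose proof (Ht e x c). rewrite (Hs x c) in *. lra.
Qed.

Lemma distinct_ultra_disjoint (k1 k2 : WK) :
  k1 <> k2 -> exists C D, proj1_sig k1 C /\ proj1_sig k2 D /\ forall x, ~ (C x /\ D x).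
Proof.
  intro Hne.
  assert (Hn : ~ forall C, proj1_sig k1 C <-> proj1_sig k2 C) by (intro H; apply Hne, WK_ext, H).
  apply not_all_ex_not in Hn. destruct Hn as [C HC].
  destruct (classic (proj1_sig k1 C)) as [H1|H1].
  - destruct (not_in_ultra d (proj1_sig k2) (proj2_sig k2) C) as [D [HD Hdis]]; [|tauto|].
    + apply (proj1 (proj2_sig k1)); auto.
    + exists C, D. auto.
  - destruct (not_in_ultra d (proj1_sig k1) (proj2_sig k1) C) as [D [HD Hdis]]; [|tauto|].
    + apply (proj1 (proj2_sig k2)). tauto.
    + exists D, C. repeat split; [auto|tauto|]. intros x [? ?]. apply (Hdis x). auto.
Qed.

Lemma WK_hausdorff : hausdorff wopen.
Proof.
  intros k1 k2 Hne.
  destruct (distinct_ultra_disjoint k1 k2 Hne) as [C [D [HC [HD Hdis]]]].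
  destruct (metric_normal C D) as [U [V [HU [HV [HCU [HDV HUV]]]]]]; auto.
  { apply (proj1 (proj2_sig k1)); auto. }
  { apply (proj1 (proj2_sig k2)); auto. }
  exists (wbasic U), (wbasic V). repeat split; try apply wbasic_open; auto.
  - exists C; auto.
  - exists D; auto.
  - intros k [[C' [HC' HC'U]] [D' [HD' HD'V]]].
    destruct (ultra_nonempty d (proj1_sig k) (proj2_sig k) (fun x => C' x /\ D' x)) as [x [Cx Dx]].
    + apply (ultra_inter d); auto. apply (proj2_sig k).
    + apply (HUV x). auto.
Qed.

Lemma wallman_finite_cover (Bs : (M -> Prop) -> Prop) :
  (forall U, Bs U -> metric_open d U) -> (forall k, exists U, Bs U /\ wbasic U k) ->
  exists lu, (forall U, In U lu -> Bs U) /\ forall x, exists U, In U lu /\ U x.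
Proof.
  intros HBs Hcov. apply NNPP. intro Hn.
  set (S := fun C => exists U, Bs U /\ C = (fun x => ~ U x)).
  assert (HSc : closed_family d S) by (intros C [U [HU ->]]; apply mclosed_compl; auto).
  assert (HSf : has_fip S).
  { intros l Hl. destruct (finite_choice (fun C U => Bs U /\ C = (fun x => ~ U x)) l Hl)
      as [lu [Hlu1 Hlu2]].
    destruct (classic (exists x, forall U, In U lu -> ~ U x)) as [[x Hx]|Hnx].
    - exists x. intros C HC. destruct (Hlu2 C HC) as [U [HU [_ ->]]]. apply Hx, HU.
    - exfalso. apply Hn. exists lu. split.
      + intros U HU. destruct (Hlu1 U HU) as [C [_ [BU _]]]. exact BU.
      + intro x. apply NNPP. intro Hx. apply Hnx. exists x. intros U HU HUx.
        apply Hx. exists U. auto. }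
  destruct (ultra_extend d S HSc HSf) as [q [Hq HSq]].
  destruct (Hcov (exist _ q Hq)) as [U [BU [C [HqC HCU]]]]. simpl in HqC.
  assert (Hq' : q (fun x => ~ U x)) by (apply HSq; exists U; auto).
  destruct (ultra_nonempty d q Hq (fun x => C x /\ ~ U x)) as [x [Cx Ux]].
  - apply (ultra_inter d); auto.
  - apply Ux, HCU, Cx.
Qed.

Lemma wallman_lift_cover (lu : list (M -> Prop)) :
  (forall U, In U lu -> metric_open d U) -> (forall x, exists U, In U lu /\ U x) ->
  forall k : WK, exists U, In U lu /\ wbasic U k.
Proof.
  intros Hlu Hcov k. apply NNPP. intro Hn.
  assert (Hc : forall U, In U lu -> proj1_sig k (fun x => ~ U x)).
  { intros U HU. destruct (ultra_compl_or_inside d _ (proj2_sig k) U (Hlu U HU)) as [H|H]; auto.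
    exfalso. apply Hn. exists U. auto. }
  destruct (proj1 (proj2 (proj2_sig k)) (map (fun U x => ~ U x) lu)) as [x Hx].
  { intros C HC. apply in_map_iff in HC. destruct HC as [U [<- HU]]. apply Hc; auto. }
  destruct (Hcov x) as [U [HU Ux]]. apply (Hx (fun x => ~ U x)); auto.
  apply in_map_iff. exists U. auto.
Qed.

Lemma WK_compact : Defs.compact wopen.
Proof.
  intros F HF Hcov.
  set (Bs := fun U => metric_open d U /\ exists W, F W /\ forall k, wbasic U k -> W k).
  destruct (wallman_finite_cover Bs) as [lu [Hlu Hcovlu]].
  - intros U [HU _]. exact HU.
  - intro k. destruct (Hcov k) as [W [FW Wk]]. destruct (HF W FW k Wk) as [U [HU [HUk HUW]]].
    exists U. split; auto. split; auto. exists W. auto.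
  - destruct (finite_choice (fun U W => F W /\ forall k, wbasic U k -> W k) lu)
      as [lw [Hlw1 Hlw2]].
    { intros U HU. destruct (Hlu U HU) as [_ [W HW]]. exists W. exact HW. }
    exists lw. split.
    + intros W HW. destruct (Hlw1 W HW) as [U [_ [FW _]]]. exact FW.
    + intro k. destruct (wallman_lift_cover lu (fun U HU => proj1 (Hlu U HU)) Hcovlu k)
        as [U [HU Uk]].
      destruct (Hlw2 U HU) as [W [HW [_ HUW]]]. exists W. auto.
Qed.

Definition emb (x : M) : WK := exist _ (prin d x) (prin_ultra d Hm x).

Lemma wbasic_emb U x : wbasic U (emb x) <-> U x.
Proof.
  split.
  - intros [C [[_ Cx] HCU]]. auto.
  - intro Ux. exists (fun y => y = x). split.
    + split. apply mclosed_single; auto. auto.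
    + intros y ->. auto.
Qed.

Lemma emb_injective x y : emb x = emb y -> x = y.
Proof.
  intro Hxy. assert (E : prin d x = prin d y) by exact (f_equal (@proj1_sig _ _) Hxy).
  assert (Hx : prin d x (fun w => w = x)) by (split; [apply mclosed_single; auto | auto]).
  rewrite E in Hx. destruct Hx as [_ Hx]. auto.
Qed.

Lemma emb_continuous V : wopen V -> metric_open d (fun x => V (emb x)).
Proof.
  intros HV x Vx. destruct (HV _ Vx) as [U [HU [HUx HUV]]].
  apply wbasic_emb in HUx. destruct (HU x HUx) as [r [Hr Hb]]. exists r. split; auto.
  intros y Hy. apply HUV, wbasic_emb. auto.
Qed.

Lemma emb_dense k : closure wopen (fun k' => exists x, emb x = k') k.
Proof.
  intros W HW Wk. destruct (HW k Wk) as [U [HU [[C [Ck HCU]] HUW]]].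
  destruct (ultra_nonempty d _ (proj2_sig k) C Ck) as [x Cx].
  exists (emb x). split. apply HUW, wbasic_emb. auto. exists x; auto.
Qed.

Definition wsmall (n : nat) (k : WK) : Prop :=
  exists C y, proj1_sig k C /\ forall w, C w -> ball d y (/ (INR n + 1)) w.

Lemma wsmall_open n : wopen (wsmall n).
Proof.
  intros k [C [y [Ck HC]]]. exists (ball d y (/ (INR n + 1))). split.
  - apply ball_open; auto.
  - split. exists C. auto. intros k' [C' [HC' HC'U]]. exists C', y. auto.
Qed.

Lemma wsmall_emb n x : wsmall n (emb x).
Proof.
  exists (fun w => w = x), x. split.
  - split. apply mclosed_single; auto. auto.
  - intros w ->. apply ball_center; auto. apply inv_succ_pos.
Qed.

Lemma ultra_first_inter p Cs n : ultra d p -> (forall n, p (Cs n)) -> p (first_inter Cs n).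
Proof. intros Hp HC. induction n; simpl; auto. apply (ultra_inter d); auto. Qed.

Lemma shrinking_limit (Cs : nat -> M -> Prop) (ys : nat -> M) :
  metric_complete d -> (forall n, exists w, first_inter Cs n w) ->
  (forall n w, Cs n w -> ball d (ys n) (/ (INR n + 1)) w) ->
  exists x, forall r, 0 < r -> exists N, forall w, Cs N w -> d x w < r.
Proof.
  pose proof Hm as [_ [_ [Hs Ht]]]. unfold ball. intros Hcpl Hne Hys.
  assert (Hz : forall n, {z | first_inter Cs n z}).
  { intro n. apply constructive_indefinite_description, Hne. }
  set (z := fun n => proj1_sig (Hz n)).
  assert (Hzn : forall n m, (n <= m)%nat -> Cs n (z m)).
  { intros n m Hnm. apply first_inter_last, (first_inter_mono Cs n m); auto. apply (proj2_sig (Hz m)). }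
  destruct (Hcpl z) as [x Hx].
  { intros eps He. destruct (arch_inv (eps/2)) as [N HN]. lra.
    exists N. intros m n Hm' Hn'.
    pose proof (Hys N (z m) (Hzn N m Hm')). pose proof (Hys N (z n) (Hzn N n Hn')).
    pose proof (HN N (le_n N)). pose proof (Ht (z m) (ys N) (z n)). pose proof (Hs (z m) (ys N)).
    lra. }
  exists x. intros r Hr.
  destruct (arch_inv (r/4)) as [N1 HN1]. lra.
  destruct (Hx (r/2)) as [N2 HN2]. lra.
  exists (Nat.max N1 N2). intros w Hw. set (N := Nat.max N1 N2) in *.
  pose proof (Hys N w Hw). pose proof (Hys N (z N) (Hzn N N (le_n N))).
  pose proof (HN1 N (Nat.le_max_l N1 N2)). pose proof (HN2 N (Nat.le_max_r N1 N2)).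
  pose proof (Ht x (z N) w). pose proof (Ht (z N) (ys N) w).
  pose proof (Hs x (z N)). pose proof (Hs (z N) (ys N)). lra.
Qed.

Lemma ultra_small_point (k : WK) :
  metric_complete d -> (forall n, wsmall n k) -> exists x, forall C, proj1_sig k C -> C x.
Proof.
  intros Hcpl Hk.
  assert (Hc : forall n, {Cy : (M -> Prop) * M | proj1_sig k (fst Cy) /\
                 forall w, fst Cy w -> ball d (snd Cy) (/ (INR n + 1)) w}).
  { intro n. apply constructive_indefinite_description. destruct (Hk n) as [C [y HCy]].
    exists (C, y). exact HCy. }
  set (Cs := fun n => fst (proj1_sig (Hc n))).
  assert (HCs : forall n, proj1_sig k (Cs n)) by (intro n; apply (proj2_sig (Hc n))).
  destruct (shrinking_limit Cs (fun n => snd (proj1_sig (Hc n)))) as [x Hx]; auto.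
  { intro n. apply (ultra_nonempty d _ (proj2_sig k)), ultra_first_inter; auto. apply (proj2_sig k). }
  { intro n. apply (proj2_sig (Hc n)). }
  exists x. intros C HC. apply NNPP. intro HnC.
  destruct (proj1 (proj2_sig k) C HC x HnC) as [r [Hr Hb]].
  destruct (Hx r Hr) as [N HN].
  destruct (ultra_nonempty d _ (proj2_sig k) (fun w => C w /\ Cs N w)) as [w [Cw Nw]].
  - apply (ultra_inter d); auto. apply (proj2_sig k).
  - apply (Hb w); auto.
Qed.

Lemma wsmall_all_emb (k : WK) :
  metric_complete d -> (forall n, wsmall n k) <-> exists x, emb x = k.
Proof.
  intro Hcpl. split.
  - intro Hk. destruct (ultra_small_point k Hcpl Hk) as [x Hx]. exists x.
    apply WK_ext. intro C. symmetry. apply (ultra_eq_prin d Hm); auto. apply (proj2_sig k).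
  - intros [x <-] n. apply wsmall_emb.
Qed.

Lemma complete_metric_cech (opM : (M -> Prop) -> Prop) :
  metric_complete d -> (forall U, opM U <-> metric_open d U) -> cech_complete opM.
Proof.
  intros Hcpl HopM.
  exists WK, wopen, emb.
  split; [apply wopen_topology|]. split; [apply WK_hausdorff|]. split; [apply WK_compact|].
  split; [apply emb_injective|].
  split; [intros V HV; apply HopM, emb_continuous, HV|].
  split.
  { intros U HU. exists (wbasic U). split.
    - apply wbasic_open, HopM, HU.
    - intro x. rewrite wbasic_emb. tauto. }
  split; [apply emb_dense|].
  exists wsmall. split; [apply wsmall_open|]. intro k. apply wsmall_all_emb, Hcpl.
Qed.

End Wallman.

Lemma completely_metrizable_cech {A : Type} (op : (A -> Prop) -> Prop) :
  completely_metrizable op -> cech_complete op.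
Proof. intros [d [Hm [Hcpl Hop]]]. apply (complete_metric_cech d Hm); auto. Qed.

(** * G_delta points of compact Hausdorff and of Cech-complete spaces *)

Section CompactHausdorff.
Context {K : Type} (opK : (K -> Prop) -> Prop).
Hypotheses (Ht : is_topology opK) (Hh : hausdorff opK) (Hc : Defs.compact opK).

Definition exterior (S : K -> Prop) (k : K) : Prop :=
  exists V, opK V /\ V k /\ forall y, ~ (S y /\ V y).

Lemma exterior_open S : opK (exterior S).
Proof.
  apply op_local; auto. intros k [V [HV [Vk Hdis]]]. exists V. repeat split; auto.
  intros y Vy. exists V. auto.
Qed.

Lemma compact_regular k0 U :
  opK U -> U k0 -> exists O, opK O /\ O k0 /\ forall k, ~ U k -> exterior O k.
Proof.
  intros HU Uk0.
  set (F := fun V => opK V /\ (V = U \/ exists A, opK A /\ A k0 /\ forall y, ~ (A y /\ V y))).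
  destruct (Hc F) as [l [Hl Hcov]].
  - intros V [HV _]. exact HV.
  - intro k. destruct (classic (U k)) as [Uk|Uk].
    + exists U. repeat split; auto.
    + destruct (Hh k0 k) as [A [V [HA [HV [Ak0 [Vk Hdis]]]]]]. intros ->. auto.
      exists V. split; auto. split; auto. right. exists A. auto.
  - destruct (finite_choice (fun V A => opK A /\ A k0 /\
        (V = U \/ forall y, ~ (A y /\ V y))) l) as [la [Hla1 Hla2]].
    { intros V HV. destruct (Hl V HV) as [_ [->|[A HA]]].
      - exists (fun _ => True). split. apply op_True; auto. auto.
      - exists A. tauto. }
    exists (inter_list la). split; [|split].
    + apply op_inter_list; auto. intros A HA. destruct (Hla1 A HA) as [V [_ [HA' _]]]. exact HA'.
    + intros A HA. destruct (Hla1 A HA) as [V [_ [_ [Ak0 _]]]]. exact Ak0.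
    + intros k Uk. destruct (Hcov k) as [V [HVl Vk]].
      destruct (Hla2 V HVl) as [A [HAl [_ [_ [->|Hdis]]]]]; [contradiction|].
      exists V. split. apply (Hl V HVl). split; auto.
      intros y [Oy Vy]. apply (Hdis y). split; auto. apply Oy, HAl.
Qed.

Lemma compact_Gdelta_fc_at k0 (Q : nat -> K -> Prop) :
  (forall n, opK (Q n) /\ Q n k0) -> (forall k, (forall n, Q n k) -> k = k0) -> fc_at opK k0.
Proof.
  intros HQ HQ0.
  assert (HO : forall n, {O | opK O /\ O k0 /\ forall k, ~ Q n k -> exterior O k}).
  { intro n. apply constructive_indefinite_description.
    apply compact_regular; apply HQ. }
  set (B := first_inter (fun n => proj1_sig (HO n))).
  assert (HBext : forall n k, ~ Q n k -> exterior (B n) k).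
  { intros n k Hk. destruct (proj2 (proj2 (proj2_sig (HO n))) k Hk) as [V [HV [Vk Hdis]]].
    exists V. repeat split; auto. intros y [By Vy]. apply (Hdis y). split; auto.
    exact (first_inter_last (fun m => proj1_sig (HO m)) n y By). }
  exists B. split.
  - intro n. split.
    + apply op_first_inter; auto. intro m. apply (proj2_sig (HO m)).
    + apply first_inter_all. intro m. apply (proj2_sig (HO m)).
  - intros U HU Uk0.
    set (F := fun V => V = U \/ exists n, V = exterior (B n)).
    destruct (Hc F) as [l [Hl Hcov]].
    + intros V [->|[n ->]]; auto. apply exterior_open.
    + intro k. destruct (classic (k = k0)) as [->|Hne].
      * exists U. split; auto. left; auto.
      * assert (Hn : exists n, ~ Q n k).
        { apply NNPP. intro Hn. apply Hne, HQ0. intro n. apply NNPP. intro. apply Hn. exists n; auto. }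
        destruct Hn as [n Hn]. exists (exterior (B n)). split; [right; exists n; auto|].
        apply HBext, Hn.
    + destruct (finite_choice (fun V n => V = U \/ V = exterior (B n)) l) as [ln [_ Hln]].
      { intros V HV. destruct (Hl V HV) as [->|[n ->]]; [exists O|exists n]; auto. }
      destruct (list_nat_max ln) as [N HN]. exists N. intros y By.
      destruct (Hcov y) as [V [HVl Vy]].
      destruct (Hln V HVl) as [n [Hn [-> | ->]]]; auto.
      destruct Vy as [W [_ [Wy Hdis]]]. exfalso. apply (Hdis y). split; auto.
      apply (first_inter_mono _ n N); auto.
Qed.

End CompactHausdorff.

(* In a Cech-complete space a G_delta point has a countable local base: it is a
   G_delta point of the compactification as well. *)
Lemma cech_Gdelta_fc_at {A : Type} (opA : (A -> Prop) -> Prop) x (W : nat -> A -> Prop) :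
  cech_complete opA -> (forall n, opA (W n) /\ W n x) -> (forall y, (forall n, W n y) -> y = x) ->
  fc_at opA x.
Proof.
  intros [K [opK [e [Ht [Hh [Hc [Hinj [Hcont [Hopen [_ [V [HV HVe]]]]]]]]]]]] HW HWx.
  assert (HW' : forall n, {W' | opK W' /\ forall y, W n y <-> W' (e y)}).
  { intro n. apply constructive_indefinite_description, Hopen, HW. }
  set (W' := fun n => proj1_sig (HW' n)).
  assert (HW'o : forall n, opK (W' n)) by (intro n; apply (proj2_sig (HW' n))).
  assert (HW'e : forall n y, W n y <-> W' n (e y)) by (intro n; apply (proj2_sig (HW' n))).
  destruct (compact_Gdelta_fc_at opK Ht Hh Hc (e x) (fun n k => V n k /\ W' n k)) as [B [HB1 HB2]].
  - intro n. split. apply op_inter; auto. split. apply HVe. exists x; auto. apply HW'e, HW.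
  - intros k Hk. destruct (proj1 (HVe k) (fun n => proj1 (Hk n))) as [y <-].
    f_equal. apply HWx. intro n. apply HW'e, Hk.
  - exists (fun n y => B n (e y)). split.
    + intro n. split. apply Hcont, HB1. apply HB1.
    + intros U HU Ux. destruct (Hopen U HU) as [U' [HU' HUU']].
      destruct (HB2 U' HU') as [n Hn]. apply HUU'; auto.
      exists n. intros y Hy. apply HUU'. auto.
Qed.

(** * The function space C(X) *)

Section FunctionSpace.
Context {T : Type} (op : (T -> Prop) -> Prop).
Hypothesis Ht : is_topology op.

Lemma CX_ext (f g : CX op) : (forall t, proj1_sig f t = proj1_sig g t) -> f = g.
Proof.
  destruct f as [f Hf], g as [g Hg]. simpl. intro H.
  assert (f = g) by (apply functional_extensionality; auto). subst. f_equal.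
  apply proof_irrelevance.
Qed.

(* The truncated uniform distance sup_t min(1, |f t - g t|). *)
Definition gap (f g : CX op) : R -> Prop :=
  fun r => r = 0 \/ exists t, r = Rmin 1 (Rabs (proj1_sig f t - proj1_sig g t)).

Lemma gap_bound f g : bound (gap f g).
Proof. exists 1. intros r [->|[t ->]]. lra. apply Rmin_l. Qed.

Lemma gap_inhabited f g : exists r, gap f g r.
Proof. exists 0. left; auto. Qed.

Definition sup_dist (f g : CX op) : R :=
  proj1_sig (completeness _ (gap_bound f g) (gap_inhabited f g)).

Lemma sup_dist_lub f g : is_lub (gap f g) (sup_dist f g).
Proof. apply (proj2_sig (completeness _ (gap_bound f g) (gap_inhabited f g))). Qed.

Lemma sup_dist_ge0 f g : 0 <= sup_dist f g.
Proof. apply (proj1 (sup_dist_lub f g)). left; auto. Qed.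

Lemma sup_dist_ub f g t : Rmin 1 (Rabs (proj1_sig f t - proj1_sig g t)) <= sup_dist f g.
Proof. apply (proj1 (sup_dist_lub f g)). right. exists t; auto. Qed.

Lemma sup_dist_le f g b :
  0 <= b -> (forall t, Rmin 1 (Rabs (proj1_sig f t - proj1_sig g t)) <= b) -> sup_dist f g <= b.
Proof. intros Hb H. apply (proj2 (sup_dist_lub f g)). intros r [->|[t ->]]; auto. Qed.

Lemma sup_dist_le_abs f g b :
  0 <= b -> (forall t, Rabs (proj1_sig f t - proj1_sig g t) <= b) -> sup_dist f g <= b.
Proof.
  intros Hb H. apply sup_dist_le; auto. intro t.
  pose proof (Rmin_r 1 (Rabs (proj1_sig f t - proj1_sig g t))). pose proof (H t). lra.
Qed.

Lemma sup_dist_small f g e t :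
  e <= 1 -> sup_dist f g < e -> Rabs (proj1_sig f t - proj1_sig g t) < e.
Proof.
  intros He Hd. pose proof (sup_dist_ub f g t). unfold Rmin in H.
  destruct (Rle_dec 1 (Rabs (proj1_sig f t - proj1_sig g t))); lra.
Qed.

Lemma sup_dist_metric : is_metric sup_dist.
Proof.
  split; [|split; [|split]].
  - apply sup_dist_ge0.
  - intros f g. split.
    + intro H. apply CX_ext. intro t.
      destruct (Req_dec (proj1_sig f t - proj1_sig g t) 0) as [E|E]; [lra|].
      pose proof (Rabs_pos_lt _ E).
      assert (Rabs (proj1_sig f t - proj1_sig g t) < 1 / 2).
      { apply sup_dist_small; lra. }
      pose proof (sup_dist_ub f g t). rewrite H in H2. unfold Rmin in H2.
      destruct (Rle_dec 1 (Rabs (proj1_sig f t - proj1_sig g t))); lra.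
    + intros ->. apply Rle_antisym; [|apply sup_dist_ge0].
      apply sup_dist_le_abs. lra. intro t. rewrite Rminus_diag, Rabs_R0. lra.
  - intros f g. apply Rle_antisym; apply sup_dist_le; try apply sup_dist_ge0; intro t;
      rewrite Rabs_minus_sym; apply sup_dist_ub.
  - intros f g h. apply sup_dist_le.
    { pose proof (sup_dist_ge0 f g). pose proof (sup_dist_ge0 g h). lra. }
    intro t. pose proof (sup_dist_ub f g t). pose proof (sup_dist_ub g h t).
    set (a := proj1_sig f t) in *. set (b := proj1_sig g t) in *. set (c := proj1_sig h t) in *.
    pose proof (Rabs_triang (a - b) (b - c)). replace (a - b + (b - c)) with (a - c) in H1 by ring.
    pose proof (Rabs_pos (a - b)). pose proof (Rabs_pos (b - c)).
    unfold Rmin in *. destruct (Rle_dec 1 (Rabs (a - c))); destruct (Rle_dec 1 (Rabs (a - b)));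
    destruct (Rle_dec 1 (Rabs (b - c))); lra.
Qed.

Lemma tube (f : T -> R) G :
  countably_compact op -> continuous op R_open f -> prod_open op G ->
  (forall t, G (t, f t)) -> exists eps, 0 < eps /\ forall t s, Rabs (s - f t) < eps -> G (t, s).
Proof.
  intros Hcc Hf HG Hgr.
  set (Un := fun n t => exists V, (op V /\ forall y s, V y ->
                Rabs (s - f y) < / (INR n + 1) -> G (y, s)) /\ V t).
  destruct (Hcc Un) as [l Hl].
  - intro n. apply (proj2 (proj2 Ht)). intros V [HV _]. auto.
  - intro t. destruct (HG t (f t) (Hgr t)) as [V [eps [HV [Vt [He Hb]]]]].
    destruct (proj1 (cont_char T op Ht f) Hf t (eps/2)) as [V' [HV' [V't HV'b]]]. lra.
    destruct (arch_inv (eps/2)) as [N HN]. lra.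
    exists N, (fun y => V y /\ V' y). split; [|split; auto].
    split. apply op_inter; auto. intros y s [Vy V'y] Hs. apply Hb; auto.
    specialize (HV'b y V'y). pose proof (HN N (le_n N)).
    pose proof (Rabs_triang (s - f y) (f y - f t)).
    replace (s - f y + (f y - f t)) with (s - f t) in H0 by ring. lra.
  - destruct (list_nat_max l) as [M HM]. exists (/ (INR M + 1)). split; [apply inv_succ_pos|].
    intros t s Hs. destruct (Hl t) as [n [Hn [V [[HV Hb] Vt]]]]. apply Hb; auto.
    pose proof (HM n Hn) as HnM. apply le_INR in HnM. pose proof (pos_INR n).
    assert (/ (INR M + 1) <= / (INR n + 1)) by (apply Rinv_le_contravar; lra). lra.
Qed.

Lemma graph_open_sup_open U :
  countably_compact op -> graph_open op U -> metric_open sup_dist U.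
Proof.
  intros Hcc HU f Uf. destruct (HU f Uf) as [G [HG [Gf HGU]]].
  destruct (tube (proj1_sig f) G Hcc (proj2_sig f) HG Gf) as [eps [He Hb]].
  exists (Rmin eps 1). split. apply Rmin_case; lra. intros g Hg. apply HGU.
  intro t. apply Hb. rewrite Rabs_minus_sym.
  pose proof (sup_dist_small f g (Rmin eps 1) t (Rmin_r _ _) Hg). pose proof (Rmin_l eps 1). lra.
Qed.

Lemma sup_open_graph_open U : metric_open sup_dist U -> graph_open op U.
Proof.
  intros HU f Uf. destruct (HU f Uf) as [eps [He Hb]].
  set (e := Rmin eps 1 / 2).
  assert (He' : 0 < e /\ e < eps)
    by (unfold e; pose proof (Rmin_l eps 1); pose proof (Rmin_r eps 1);
        split; [apply Rmin_case; lra | lra]).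
  exists (fun p => Rabs (snd p - proj1_sig f (fst p)) < e). split; [|split].
  - intros x r Hr. simpl in Hr. set (del := e - Rabs (r - proj1_sig f x)).
    destruct (proj1 (cont_char T op Ht _) (proj2_sig f) x (del/2)) as [V [HV [Vx HVb]]].
    { unfold del; lra. }
    exists V, (del/2). repeat split; auto. unfold del; lra.
    intros y s Vy Hs. simpl. specialize (HVb y Vy).
    pose proof (Rabs_triang (s - r) (r - proj1_sig f x)).
    pose proof (Rabs_triang ((s - r) + (r - proj1_sig f x)) (proj1_sig f x - proj1_sig f y)).
    replace (s - r + (r - proj1_sig f x) + (proj1_sig f x - proj1_sig f y))
      with (s - proj1_sig f y) in H0 by ring.
    rewrite (Rabs_minus_sym (proj1_sig f x)) in H0. unfold del in *. lra.
  - intro t. simpl. rewrite Rminus_diag, Rabs_R0. lra.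
  - intros g Hg. apply Hb. apply Rle_lt_trans with e; [|lra]. apply sup_dist_le_abs. lra.
    intro t. specialize (Hg t). simpl in Hg. rewrite Rabs_minus_sym. lra.
Qed.

(* C(X) is complete for the sup metric: a Cauchy sequence converges uniformly,
   and uniform limits of continuous functions are continuous. *)
Lemma sup_dist_complete : metric_complete sup_dist.
Proof.
  intros s Hs.
  assert (Hcs : forall t, Cauchy_crit (fun n => proj1_sig (s n) t)).
  { intros t eps He. destruct (Hs (Rmin eps 1)) as [N HN]. apply Rmin_case; lra.
    exists N. intros n m Hn Hm. unfold R_dist.
    pose proof (sup_dist_small (s n) (s m) (Rmin eps 1) t (Rmin_r _ _) (HN n m Hn Hm)).
    pose proof (Rmin_l eps 1). lra. }
  set (L := fun t => proj1_sig (R_complete _ (Hcs t))).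
  assert (HL : forall t, Un_cv (fun n => proj1_sig (s n) t) (L t))
    by (intro t; apply (proj2_sig (R_complete _ (Hcs t)))).
  assert (Hunif : forall eps, 0 < eps -> exists N, forall n, (N <= n)%nat -> forall t,
              Rabs (proj1_sig (s n) t - L t) <= eps).
  { intros eps He. set (e1 := Rmin eps 1 / 2).
    assert (He1 : 0 < e1 /\ e1 <= eps /\ e1 <= 1)
      by (unfold e1; pose proof (Rmin_l eps 1); pose proof (Rmin_r eps 1);
          split; [apply Rmin_case; lra | lra]).
    destruct (Hs e1) as [N HN]. lra. exists N. intros n Hn t.
    apply Rnot_lt_le. intro Hc.
    destruct (HL t (Rabs (proj1_sig (s n) t - L t) - e1)) as [M HM]. lra.
    set (m := Nat.max N M). specialize (HM m ltac:(lia)). unfold R_dist in HM.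
    pose proof (sup_dist_small (s n) (s m) e1 t ltac:(lra) (HN n m Hn ltac:(lia))).
    pose proof (Rabs_triang (proj1_sig (s n) t - proj1_sig (s m) t) (proj1_sig (s m) t - L t)).
    replace (proj1_sig (s n) t - proj1_sig (s m) t + (proj1_sig (s m) t - L t))
      with (proj1_sig (s n) t - L t) in H0 by ring.
    lra. }
  assert (HLc : continuous op R_open L).
  { apply (cont_uniform_limit T op Ht (fun n => proj1_sig (s n))).
    - intro n. apply (proj2_sig (s n)).
    - intros eps He. destruct (Hunif eps He) as [N HN]. exists N. apply HN, le_n. }
  exists (exist _ L HLc). intros eps He. destruct (Hunif (eps/2)) as [N HN]. lra.
  exists N. intros n Hn. apply Rle_lt_trans with (eps/2); [|lra].
  apply sup_dist_le_abs. lra. intro t. simpl. apply HN; auto.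
Qed.

Lemma countably_compact_completely_metrizable :
  countably_compact op -> completely_metrizable (graph_open op).
Proof.
  intro Hcc. exists sup_dist. split; [apply sup_dist_metric|]. split; [apply sup_dist_complete|].
  intro U. split; [apply graph_open_sup_open; auto | apply sup_open_graph_open].
Qed.

End FunctionSpace.

(** * Series of continuous functions *)

Fixpoint partial_sum (a : nat -> R) (N : nat) : R :=
  match N with O => 0 | S N' => partial_sum a N' + a N' end.

Lemma partial_sum_mono a N M : (forall n, 0 <= a n) -> (N <= M)%nat -> partial_sum a N <= partial_sum a M.
Proof. intros Ha H. induction H. lra. simpl. pose proof (Ha m). lra. Qed.

Lemma partial_sum_zero a N : (forall n, (n < N)%nat -> a n = 0) -> partial_sum a N = 0.
Proof.
  induction N as [|N IH]; intro H; simpl; auto.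
  rewrite (H N) by lia. rewrite IH. ring. intros n Hn. apply H. lia.
Qed.

Lemma partial_sum_tail a N K :
  (forall n, 0 <= a n) -> (forall n, (N <= n)%nat -> a n <= K * (/2)^(S n)) -> 0 <= K ->
  forall M, partial_sum a M <= partial_sum a N + K * (/2)^N.
Proof.
  intros Ha0 Ha HK M. pose proof (pow_le (/2) N ltac:(lra)).
  destruct (Nat.le_gt_cases M N) as [HMN|HMN].
  - pose proof (partial_sum_mono a M N Ha0 HMN). nra.
  - assert (Hk : forall k, partial_sum a (N + k) <= partial_sum a N + K * (/2)^N - K * (/2)^(N + k)).
    { induction k as [|k IH].
      - rewrite Nat.add_0_r. lra.
      - rewrite Nat.add_succ_r. simpl. pose proof (Ha (N + k)%nat ltac:(lia)) as Hb.
        simpl in Hb. lra. }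
    replace M with (N + (M - N))%nat by lia. pose proof (Hk (M - N)%nat).
    pose proof (pow_le (/2) (N + (M - N)) ltac:(lra)). nra.
Qed.

Section Series.
Context {T : Type} (op : (T -> Prop) -> Prop).
Hypothesis Ht : is_topology op.

Lemma series_continuous (a : nat -> T -> R) :
  (forall n, continuous op R_open (a n)) -> (forall n t, 0 <= a n t <= (/2)^(S n)) ->
  exists L, continuous op R_open L /\
    (forall N t, partial_sum (fun n => a n t) N <= L t) /\
    (forall t b, (forall N, partial_sum (fun n => a n t) N <= b) -> L t <= b).
Proof.
  intros Hc Hb.
  assert (Htail : forall t N M, partial_sum (fun n => a n t) M <= partial_sum (fun n => a n t) N + (/2)^N).
  { intros t N M. rewrite <- (Rmult_1_l ((/2)^N)).
    apply partial_sum_tail; try lra; intros; rewrite ?Rmult_1_l; apply Hb. }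
  assert (Hlub : forall t, {L | is_lub (fun r => exists N, r = partial_sum (fun n => a n t) N) L}).
  { intro t. apply completeness.
    - exists 1. intros r [N ->]. pose proof (Htail t O N). simpl in H. lra.
    - exists 0. exists O. auto. }
  set (L := fun t => proj1_sig (Hlub t)).
  assert (HL1 : forall N t, partial_sum (fun n => a n t) N <= L t)
    by (intros N t; apply (proj1 (proj2_sig (Hlub t))); exists N; auto).
  assert (HL2 : forall t b, (forall N, partial_sum (fun n => a n t) N <= b) -> L t <= b)
    by (intros t b Hb'; apply (proj2 (proj2_sig (Hlub t))); intros r [N ->]; auto).
  exists L. split; [|split; auto].
  apply (cont_uniform_limit T op Ht (fun N t => partial_sum (fun n => a n t) N)).
  - induction n as [|n IH]; simpl. apply cont_const; auto. apply cont_plus; auto.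
  - intros eps He. destruct (pow_lt_1_zero (/2) ltac:(rewrite Rabs_right; lra) eps He) as [N HN].
    exists N. intro t. specialize (HN N (le_n N)). rewrite Rabs_right in HN.
    2:{ apply Rle_ge, pow_le. lra. }
    pose proof (HL1 N t). pose proof (HL2 t _ (Htail t N)).
    rewrite Rabs_left1; lra.
Qed.

Fixpoint running_min (w : nat -> R) (n : nat) : R :=
  match n with O => Rmin 1 (w O) | S m => Rmin (running_min w m) (w (S m)) end.

Lemma running_min_props (w : nat -> R) : (forall n, 0 < w n) ->
  forall n, 0 < running_min w n /\ running_min w n <= 1 /\ running_min w n <= w n.
Proof.
  intros Hw n. induction n as [|n IH]; simpl.
  - pose proof (Hw O). repeat split. apply Rmin_case; lra. apply Rmin_l. apply Rmin_r.
  - pose proof (Hw (S n)). destruct IH as [H1 [H2 H3]]. repeat split.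
    apply Rmin_case; lra. pose proof (Rmin_l (running_min w n) (w (S n))); lra. apply Rmin_r.
Qed.

Lemma running_min_anti (w : nat -> R) n m : (n <= m)%nat -> running_min w m <= running_min w n.
Proof. intro H. induction H. lra. simpl. pose proof (Rmin_l (running_min w m) (w (S m))). lra. Qed.

(* Summing the bumps phi_n with weights running_min w n * 2^-(n+1) gives a
   continuous function which is positive where some phi_n is, zero where all
   vanish, and bounded by w n0 where n0 is the first index with phi_n0 <> 0. *)
Lemma weighted_bump_sum (phi : nat -> T -> R) (w : nat -> R) :
  (forall n, continuous op R_open (phi n)) -> (forall n t, 0 <= phi n t <= 1) ->
  (forall n, 0 < w n) ->
  exists L, continuous op R_open L /\
    (forall n t, 0 < phi n t -> 0 < L t) /\
    (forall t, (forall n, phi n t = 0) -> L t = 0) /\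
    (forall n0 t, (forall m, (m < n0)%nat -> phi m t = 0) -> 0 <= L t <= w n0).
Proof.
  intros Hpc Hpb Hw. pose proof (running_min_props w Hw) as Hm.
  set (a := fun n t => running_min w n * (/2)^(S n) * phi n t).
  assert (Ha0 : forall n t, 0 <= a n t).
  { intros n t. unfold a. destruct (Hm n) as [? _]. pose proof (pow_le (/2) (S n) ltac:(lra)).
    pose proof (Hpb n t). apply Rmult_le_pos; [apply Rmult_le_pos|]; lra. }
  assert (Ha1 : forall n0 n t, (n0 <= n)%nat -> a n t <= running_min w n0 * (/2)^(S n)).
  { intros n0 n t H. unfold a. pose proof (running_min_anti w n0 n H). destruct (Hm n) as [? _].
    pose proof (pow_le (/2) (S n) ltac:(lra)). pose proof (Hpb n t).
    assert (running_min w n * (/ 2) ^ S n * phi n t <= running_min w n * (/ 2) ^ S n * 1)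
      by (apply Rmult_le_compat_l; [apply Rmult_le_pos|]; lra).
    nra. }
  destruct (series_continuous a) as [L [HLc [HL1 HL2]]].
  - intro n. apply cont_scal; auto.
  - intros n t. split; auto. pose proof (Ha1 O n t (Nat.le_0_l n)). destruct (Hm O) as [_ [? _]].
    pose proof (pow_le (/2) (S n) ltac:(lra)). nra.
  - exists L. split; [exact HLc|split; [|split]].
    + intros n t Hp. pose proof (HL1 (S n) t) as H. simpl in H.
      pose proof (partial_sum_mono (fun m => a m t) O n (fun m => Ha0 m t) (Nat.le_0_l n)).
      simpl in H0. destruct (Hm n) as [? _].
      pose proof (pow_lt (/2) (S n) ltac:(lra)).
      assert (0 < a n t) by (unfold a; apply Rmult_lt_0_compat; [apply Rmult_lt_0_compat|]; lra).
      lra.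
    + intros t H0. apply Rle_antisym.
      * apply HL2. intro N. rewrite partial_sum_zero; [lra|]. intros n _. unfold a. rewrite H0. ring.
      * apply (HL1 O).
    + intros n0 t H0. split; [apply (HL1 O)|].
      apply HL2. intro N.
      pose proof (partial_sum_tail (fun n => a n t) n0 (running_min w n0) (fun n => Ha0 n t)
                    (fun n Hn => Ha1 n0 n t Hn) ltac:(destruct (Hm n0) as [Hpos _]; lra) N) as HN.
      rewrite (partial_sum_zero _ n0) in HN.
      2:{ intros m Hm0. unfold a. rewrite (H0 m Hm0). ring. }
      destruct (Hm n0) as [? [? ?]]. pose proof (pow_le (/2) n0 ltac:(lra)).
      assert ((/2)^n0 <= 1) by (rewrite <- (pow1 n0); apply pow_incr; lra).
      nra.
Qed.

End Series.

(** * Failure of countable tightness when X is not countably compact *)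

Lemma least_nat (P : nat -> Prop) :
  (exists n, P n) -> exists n, P n /\ forall m, (m < n)%nat -> ~ P m.
Proof.
  intros [n Hn]. apply NNPP. intro Hno. revert Hn. pattern n. apply (well_founded_ind lt_wf).
  intros k IH Pk. apply Hno. exists k. split; [exact Pk|]. intros m Hm Pm. apply (IH m Hm Pm).
Qed.

Lemma iter_inflationary_ge (c : nat -> nat) :
  (forall n, (n < c n)%nat) -> forall i, (i <= Nat.iter i c O)%nat.
Proof. intros Hc i. induction i; simpl. lia. pose proof (Hc (Nat.iter i c O)). lia. Qed.

Lemma iter_inflationary_mono (c : nat -> nat) :
  (forall n, (n < c n)%nat) -> forall i j, (i <= j)%nat -> (Nat.iter i c O <= Nat.iter j c O)%nat.
Proof. intros Hc i j H. induction H. lia. simpl. pose proof (Hc (Nat.iter m c O)). lia. Qed.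

Section NotCountablyCompact.
Context {T : Type} (op : (T -> Prop) -> Prop).
Hypothesis Ht : is_topology op.

Lemma T1_avoid_finite (x : nat -> T) t W m :
  T1_space op -> op W -> W t ->
  exists W', op W' /\ W' t /\ (forall z, W' z -> W z) /\
    forall i, (i < m)%nat -> W' (x i) -> x i = t.
Proof.
  intros HT1 HW Wt. induction m as [|m IH].
  - exists W. repeat split; auto. intros i Hi. lia.
  - destruct IH as [W' [HW' [W't [HW'W HW'i]]]].
    destruct (classic (x m = t)) as [E|E].
    + exists W'. repeat split; auto. intros i Hi Wi.
      destruct (Nat.eq_dec i m) as [->|Hne]; auto. apply HW'i; auto. lia.
    + destruct (HT1 t (x m)) as [O [HO [Ot Oxm]]]; auto.
      exists (fun z => W' z /\ O z). split; [apply op_inter; auto|]. repeat split; auto.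
      * intros z [W'z _]. auto.
      * intros i Hi [W'i Oi]. destruct (Nat.eq_dec i m) as [->|Hne]; [contradiction|].
        apply HW'i; auto. lia.
Qed.

Lemma not_cc_discrete_seq :
  T1_space op -> ~ countably_compact op ->
  exists x : nat -> T, (forall i j, x i = x j -> i = j) /\
    forall t, exists W, op W /\ W t /\ forall i, W (x i) -> x i = t.
Proof.
  intros HT1 Hncc. unfold countably_compact in Hncc.
  apply not_all_ex_not in Hncc. destruct Hncc as [U HU].
  apply imply_to_and in HU. destruct HU as [HUo HU].
  apply imply_to_and in HU. destruct HU as [HUc HU].
  (* y N escapes U 0, ..., U N, and lies in U (c N) with c N > N. *)
  assert (Hy : forall N, {t | forall n, (n <= N)%nat -> ~ U n t}).
  { intro N. apply constructive_indefinite_description. apply NNPP. intro Hn.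
    apply HU. exists (seq 0 (S N)). intro x. apply NNPP. intro Hx. apply Hn. exists x.
    intros n Hn' Unx. apply Hx. exists n. split; auto. apply in_seq. lia. }
  set (y := fun N => proj1_sig (Hy N)).
  assert (Hyp : forall N n, (n <= N)%nat -> ~ U n (y N)) by (intro N; apply (proj2_sig (Hy N))).
  assert (Hcn : forall N, {n | U n (y N)}).
  { intro N. apply constructive_indefinite_description, HUc. }
  set (c := fun N => proj1_sig (Hcn N)).
  assert (HcU : forall N, U (c N) (y N)) by (intro N; apply (proj2_sig (Hcn N))).
  assert (Hc : forall N, (N < c N)%nat).
  { intro N. destruct (le_lt_dec (c N) N) as [H|H]; auto. exfalso. apply (Hyp N (c N) H). auto. }
  set (x := fun j => y (Nat.iter j c O)).
  assert (Hsep : forall j i, (S j <= i)%nat -> ~ U (Nat.iter (S j) c O) (x i)).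
  { intros j i H. apply Hyp. apply iter_inflationary_mono; auto. }
  exists x. split.
  - intros i j E. destruct (lt_eq_lt_dec i j) as [[H|H]|H]; auto; exfalso.
    + apply (Hsep i j H). rewrite <- E. apply HcU.
    + apply (Hsep j i H). rewrite E. apply HcU.
  - intro t. destruct (HUc t) as [m Hm].
    destruct (T1_avoid_finite x t (U m) m HT1 (HUo m) Hm) as [W [HW [Wt [HWU HWi]]]].
    exists W. repeat split; auto. intros i Wi. destruct (lt_dec i m) as [H|H]; auto.
    exfalso. apply (Hyp (Nat.iter i c O) m).
    + pose proof (iter_inflationary_ge c Hc i). lia.
    + apply HWU, Wi.
Qed.

Definition zero_fun : CX op := exist _ (fun _ => 0) (cont_const T op Ht 0).

Lemma bump_in_tube G x0 :
  tychonoff op -> prod_open op G -> (forall t, G (t, 0)) ->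
  exists w phi, 0 < w /\ continuous op R_open phi /\ (forall t, 0 <= phi t <= 1) /\
    phi x0 = 1 /\ forall t, phi t <> 0 -> forall s, Rabs s <= w -> G (t, s).
Proof.
  intros [_ Hcr] HG HG0.
  destruct (HG x0 0 (HG0 x0)) as [V [eps [HV [Vx [He Hb]]]]].
  destruct (Hcr (fun t => ~ V t) x0) as [psi [Hpc [Hpb [Hp0 Hp1]]]].
  - apply (op_ext op V); auto. intro t. split; [tauto|]. apply NNPP.
  - tauto.
  - exists (eps/2), (fun t => 1 + (-1) * psi t). split; [lra|split; [|split; [|split]]].
    + apply cont_plus; auto. apply cont_const; auto. apply cont_scal; auto.
    + intro t. pose proof (Hpb t). lra.
    + rewrite Hp0. lra.
    + intros t Ht0 s Hs. destruct (classic (V t)) as [Vt|Vt].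
      * apply Hb; auto. rewrite Rminus_0_r. lra.
      * exfalso. apply Ht0. rewrite Hp1; auto. lra.
Qed.

Lemma zero_in_closure_nonvanishing (x : nat -> T) :
  tychonoff op -> closure (graph_open op) (fun f => forall n, proj1_sig f (x n) <> 0) zero_fun.
Proof.
  intros Hty U HU Uz. destruct (HU _ Uz) as [G [HG [Gz HGU]]].
  assert (Hbump : forall n, {wphi : R * (T -> R) | 0 < fst wphi /\
     continuous op R_open (snd wphi) /\ (forall t, 0 <= snd wphi t <= 1) /\ snd wphi (x n) = 1 /\
     forall t, snd wphi t <> 0 -> forall s, Rabs s <= fst wphi -> G (t, s)}).
  { intro n. apply constructive_indefinite_description.
    destruct (bump_in_tube G (x n) Hty HG Gz) as [w [phi Hwphi]]. exists (w, phi). exact Hwphi. }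
  set (w := fun n => fst (proj1_sig (Hbump n))).
  set (phi := fun n => snd (proj1_sig (Hbump n))).
  assert (Hw : forall n, 0 < w n) by (intro n; apply (proj2_sig (Hbump n))).
  assert (Hpc : forall n, continuous op R_open (phi n)) by (intro n; apply (proj2_sig (Hbump n))).
  assert (Hpb : forall n t, 0 <= phi n t <= 1) by (intro n; apply (proj2_sig (Hbump n))).
  assert (Hp1 : forall n, phi n (x n) = 1) by (intro n; apply (proj2_sig (Hbump n))).
  assert (HpG : forall n t, phi n t <> 0 -> forall s, Rabs s <= w n -> G (t, s))
    by (intro n; apply (proj2_sig (Hbump n))).
  clearbody w phi.
  destruct (weighted_bump_sum op Ht phi w Hpc Hpb Hw) as [L [HLc [HLpos [HL0 HLw]]]].
  exists (exist _ L HLc). split.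
  - apply HGU. intro t. simpl. destruct (classic (exists n, phi n t <> 0)) as [Hex|Hnex].
    + destruct (least_nat _ Hex) as [n0 [Hn0 Hlt]].
      apply (HpG n0 t Hn0). destruct (HLw n0 t) as [H1 H2].
      { intros m Hm. apply NNPP. intro. apply (Hlt m); auto. }
      rewrite Rabs_right; lra.
    + rewrite HL0. apply Gz. intro n. apply NNPP. intro. apply Hnex. exists n. auto.
  - intro n. simpl. assert (0 < L (x n)); [|lra]. apply (HLpos n). rewrite Hp1. lra.
Qed.

(* No countable family B of functions vanishing nowhere on an injective closed
   discrete sequence accumulates at zero: enumerating B by g, the open set G
   bounding the graph over x (g f) by |f (x (g f))| yields a neighbourhood F_G of
   zero which contains no member of B. *)
Lemma no_countable_subset (x : nat -> T) :
  (forall i j, x i = x j -> i = j) ->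
  (forall t, exists W, op W /\ W t /\ forall i, W (x i) -> x i = t) ->
  forall B : CX op -> Prop, (forall f, B f -> forall n, proj1_sig f (x n) <> 0) ->
  countable_set B -> ~ closure (graph_open op) B zero_fun.
Proof.
  intros Hinj Hdisc B HB [g Hg] Hcl.
  set (G := fun p : T * R => forall n f, fst p = x n -> B f -> g f = n ->
              Rabs (snd p) < Rabs (proj1_sig f (x n))).
  assert (HGo : prod_open op G).
  { intros t r Htr. destruct (Hdisc t) as [W [HW [Wt HWx]]].
    destruct (classic (exists n f, t = x n /\ B f /\ g f = n)) as [[n0 [f0 [E0 [Bf0 gf0]]]]|Hne].
    - assert (Hr := Htr n0 f0 E0 Bf0 gf0). simpl in Hr.
      exists W, (Rabs (proj1_sig f0 (x n0)) - Rabs r). repeat split; auto. lra.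
      intros y s Wy Hs n f Eyn Bf gfn. simpl in *. subst y.
      assert (x n = t) by (apply HWx; auto).
      assert (En : n = n0) by (apply Hinj; congruence).
      assert (Ef : f = f0) by (apply Hg; auto; congruence).
      rewrite En, Ef. pose proof (Rabs_triang (s - r) r) as Htri. replace (s - r + r) with s in Htri by ring. lra.
    - exists W, 1. repeat split; auto. lra.
      intros y s Wy Hs n f Eyn Bf gfn. simpl in *. subst y. exfalso. apply Hne.
      exists n, f. split; auto. symmetry. apply HWx; auto. }
  destruct (Hcl (F_G op G)) as [y [Gy By]].
  - intros f Hf. exists G. auto.
  - intros t n f _ Bf _. simpl. rewrite Rabs_R0. apply Rabs_pos_lt, HB; auto.
  - specialize (Gy (x (g y)) (g y) y eq_refl By eq_refl). simpl in Gy. lra.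
Qed.

Lemma tight_zero_countably_compact :
  tychonoff op -> tight_at (graph_open op) zero_fun -> countably_compact op.
Proof.
  intros Hty Htight. apply NNPP. intro Hncc.
  destruct (not_cc_discrete_seq (proj1 Hty) Hncc) as [x [Hinj Hdisc]].
  destruct (Htight _ (zero_in_closure_nonvanishing x Hty)) as [B [HBA [HBc HBcl]]].
  apply (no_countable_subset x Hinj Hdisc B); auto.
Qed.

Lemma zero_Gdelta :
  exists W : nat -> CX op -> Prop, (forall n, graph_open op (W n) /\ W n zero_fun) /\
    forall f, (forall n, W n f) -> f = zero_fun.
Proof.
  exists (fun n => F_G op (fun p : T * R => Rabs (snd p) < / (INR n + 1))). split.
  - intro n. split.
    + intros f Hf. exists (fun p : T * R => Rabs (snd p) < / (INR n + 1)). repeat split; auto.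
      intros t r Hr. simpl in Hr.
      exists (fun _ => True), (/ (INR n + 1) - Rabs r). repeat split; [apply op_True; auto|lra|].
      intros y s _ Hs. simpl.
      pose proof (Rabs_triang (s - r) r). replace (s - r + r) with s in H by ring. lra.
    + intro t. simpl. rewrite Rabs_R0. apply inv_succ_pos.
  - intros f Hf. apply (CX_ext op). intro t. simpl. apply NNPP. intro Hne.
    destruct (arch_inv _ (Rabs_pos_lt _ Hne)) as [N HN].
    specialize (Hf N t). simpl in Hf. pose proof (HN N (le_n N)). lra.
Qed.

End NotCountablyCompact.

Theorem proposition2p1 (T : Type) (op : (T -> Prop) -> Prop)
  (Htop : is_topology op) (Htych : tychonoff op) :
  (first_countable (graph_open op) <-> countably_compact op) /\
  (metrizable (graph_open op) <-> countably_compact op) /\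
  (completely_metrizable (graph_open op) <-> countably_compact op) /\
  (cech_complete (graph_open op) <-> countably_compact op) /\
  (frechet_urysohn (graph_open op) <-> countably_compact op) /\
  (countable_tightness (graph_open op) <-> countably_compact op).
Proof.
  set (zero := zero_fun op Htop).
  assert (Hcm : countably_compact op -> completely_metrizable (graph_open op))
    by (apply countably_compact_completely_metrizable; auto).
  assert (Hmet : countably_compact op -> metrizable (graph_open op))
    by (intro H; apply completely_metrizable_metrizable, Hcm, H).
  assert (Hcc : tight_at (graph_open op) zero -> countably_compact op)
    by (apply tight_zero_countably_compact; auto).
  assert (Hfc : fc_at (graph_open op) zero -> countably_compact op)
    by (intro H; apply Hcc, fc_at_tight_at, H).
  assert (Hfr : frechet_urysohn (graph_open op) -> countably_compact op)
    by (intro H; apply Hcc; intros P HP; apply (frechet_tightness _ H), HP).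
  split; [|split; [|split; [|split; [|split]]]]; split; intro H.
  - apply Hfc, H.
  - apply metrizable_first_countable, Hmet, H.
  - apply Hfc, metrizable_first_countable, H.
  - apply Hmet, H.
  - apply Hfc, metrizable_first_countable, completely_metrizable_metrizable, H.
  - apply Hcm, H.
  - destruct (zero_Gdelta op Htop) as [W [HW HW0]]. apply Hfc, (cech_Gdelta_fc_at _ _ W); auto.
  - apply completely_metrizable_cech, Hcm, H.
  - apply Hfr, H.
  - apply metrizable_frechet, Hmet, H.
  - apply Hcc. intros P HP. apply H, HP.
  - apply frechet_tightness, metrizable_frechet, Hmet, H.
Qed.
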